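(* Let $\Omega_1,\dots,\Omega_K$ be linear subspaces of $\mathbb{R}^n$ whose sum is $\mathbb{R}^n$. For each $k=1,\dots,K$ let $W_k$ be a matrix with rows $w_{k,1},\dots,w_{k,N_k}$, all lying in $\Omega_k$, such that $W_k$ has a directed spanning set of $\Omega_k$ with respect to every $x \in \Omega_k$. Let $W$ be the matrix obtained by stacking the rows of $W_1,\dots,W_K$. Then $W$ has a directed spanning set of $\mathbb{R}^n$ with respect to every $x \in \mathbb{R}^n$.
   Context: A matrix $W$ with rows $w_i \in \mathbb{R}^n$ has a directed spanning set (DSS) of a subspace $\Omega\subset\mathbb{R}^n$ with respect to $x \in \mathbb{R}^n$ if there is a collection of rows $w_i$ of $W$ with $\langle x, w_i\rangle \geq 0$ for each of them and whose span contains $\Omega$. *)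

From HB Require Import structures.
From mathcomp Require Import all_boot all_order all_algebra.
Set Implicit Arguments. Unset Strict Implicit. Unset Printing Implicit Defensive.
Import Order.TTheory GRing.Theory Num.Theory.
Local Open Scope ring_scope.

(* Vectors of R^n are row vectors 'rV[R]_n; a linear subspace of R^n is
   represented (as in mxalgebra) by the row space of a matrix.
   Standard inner product <x, w> = \sum_j x_j w_j. *)
Definition dotv (R : realFieldType) (n : nat) (x w : 'rV[R]_n) : R :=
  \sum_(j < n) x 0 j * w 0 j.

Definition has_dss (R : realFieldType) (n N : nat) (W : 'M[R]_(N, n))
    (Om : 'M[R]_n) (x : 'rV[R]_n) : Prop :=
  exists S : {set 'I_N},
    (forall i, i \in S -> 0 <= dotv x (row i W)) /\
    (Om <= (\sum_(i in S) <<row i W>>))%MS.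

From HB Require Import structures.
From mathcomp Require Import all_boot all_order all_algebra.
Set Implicit Arguments. Unset Strict Implicit. Unset Printing Implicit Defensive.
Import Order.TTheory GRing.Theory Num.Theory.
Local Open Scope ring_scope.

(* Fix x and let y_k be the orthogonal projection of x onto Om_k.  Every row w
   of W_k lies in Om_k, so <x, w> = <y_k, w>: the directed spanning set of Om_k
   that W_k has with respect to y_k is also directed with respect to x.  Taking
   all rows of W with <x, w> >= 0 therefore spans every Om_k, hence their sum,
   which is R^n. *)

Section DirectedSpan.

Variable R : realFieldType.

Lemma dotvE n (x w : 'rV[R]_n) : dotv x w = (x *m w^T) 0 0.
Proof. by rewrite mxE; apply: eq_bigr => j _; rewrite mxE. Qed.

Lemma dotvv_eq0 n (u : 'rV[R]_n) : (dotv u u == 0) = (u == 0).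
Proof.
apply/idP/eqP => [|->]; last by rewrite /dotv big1 // => j _; rewrite mxE mul0r.
move/eqP/psumr_eq0P => uu0; apply/rowP => j; rewrite mxE.
have /eqP : u 0 j * u 0 j = 0 by apply: uu0 => // i _; rewrite -expr2 sqr_ge0.
by rewrite mulf_eq0 orbb => /eqP.
Qed.

Lemma row_base_gram_unit m n (A : 'M[R]_(m, n)) :
  row_base A *m (row_base A)^T \in unitmx.
Proof.
rewrite unitmxE unitfE; apply/negP => /det0P [v nz_v vG0].
have : dotv (v *m row_base A) (v *m row_base A) == 0.
  by rewrite dotvE trmx_mul mulmxA -(mulmxA v) vG0 mul0mx mxE.
by rewrite dotvv_eq0 mulmx_free_eq0 ?row_base_free // (negPf nz_v).
Qed.

(* y := x B^T (B B^T)^-1 B, with B a row basis of A, is the orthogonal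
   projection of x onto the row space of A. *)
Lemma exists_proj_dotv m n (A : 'M[R]_(m, n)) (x : 'rV[R]_n) :
  exists2 y : 'rV[R]_n, (y <= A)%MS & forall w, (w <= A)%MS -> dotv x w = dotv y w.
Proof.
set B := row_base A; set G := B *m B^T.
exists (x *m B^T *m invmx G *m B).
  by apply: submx_trans (submxMl _ _) _; rewrite eq_row_base.
have projBT : x *m B^T *m invmx G *m B *m B^T = x *m B^T.
  by rewrite -(mulmxA _ B) mulmxKV ?row_base_gram_unit.
move=> w; rewrite -(eq_row_base A) -/B => /submxP [d ->].
by rewrite !dotvE trmx_mul !(mulmxA _ B^T) projBT.
Qed.

Definition directed_span n N (W : 'M[R]_(N, n)) (x : 'rV[R]_n) : 'M[R]_n :=
  (\sum_(i | (0 <= dotv x (row i W))%R) <<row i W>>)%MS.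

Lemma has_dssP n N (W : 'M[R]_(N, n)) (Om : 'M[R]_n) (x : 'rV[R]_n) :
  has_dss W Om x <-> (Om <= directed_span W x)%MS.
Proof.
split=> [[S [S_ge0 sOmS]]|sOmW].
  apply: submx_trans sOmS _; apply/sumsmx_subP => i /S_ge0 x_i_ge0.
  exact: (sumsmx_sup i).
exists [set i | 0 <= dotv x (row i W)]; split=> [i|]; first by rewrite inE.
by apply: submx_trans sOmW _; apply/sumsmx_subP => i x_i_ge0;
  apply: (sumsmx_sup i); rewrite ?inE.
Qed.

Lemma eq_directed_span n N (W : 'M[R]_(N, n)) (x y : 'rV[R]_n) :
  (forall i, dotv x (row i W) = dotv y (row i W)) ->
  directed_span W x = directed_span W y.
Proof. by move=> eq_xy; apply: eq_bigl => i; rewrite eq_xy. Qed.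

Lemma directed_span_mxcol n K (N : 'I_K -> nat)
    (Wk : forall k : 'I_K, 'M[R]_(N k, n)) (x : 'rV[R]_n) k :
  (directed_span (Wk k) x <= directed_span (\mxcol_(k < K) Wk k) x)%MS.
Proof.
have rowRank j : row (tagnat.Rank k j) (\mxcol_(k < K) Wk k) = row j (Wk k).
  by rewrite row_mxcol /tagnat.sig1 /tagnat.sig2 tagnat.rankK.
apply/sumsmx_subP => j x_j_ge0.
by apply: (sumsmx_sup (tagnat.Rank k j)); rewrite rowRank.
Qed.

End DirectedSpan.

Theorem lemma2 (R : realFieldType) (n K : nat) (Om : 'I_K -> 'M[R]_n)
    (N : 'I_K -> nat) (Wk : forall k : 'I_K, 'M[R]_(N k, n)) :
  ((\sum_(k < K) Om k)%MS == 1%:M)%MS ->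
  (forall k (i : 'I_(N k)), (row i (Wk k) <= Om k)%MS) ->
  (forall k (x : 'rV[R]_n), (x <= Om k)%MS -> has_dss (Wk k) (Om k) x) ->
  forall x : 'rV[R]_n, has_dss (\mxcol_(k < K) Wk k) 1%:M x.
Proof.
move=> /andP [_ sum_Om_full] rows_in_Om dss_Om x; apply/has_dssP.
apply: submx_trans sum_Om_full _; apply/sumsmx_subP => k _.
have [y y_in_Om proj_y] := exists_proj_dotv (Om k) x.
have /has_dssP sOm_span_y := dss_Om k y y_in_Om.
apply: submx_trans (directed_span_mxcol Wk x k).
by rewrite (eq_directed_span (fun i => proj_y _ (rows_in_Om k i))).
Qed.
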